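(* Fix integers $t,\omega$ with $2\le t\le\omega$. For $\Delta\ge1$ let $a=\lfloor\Delta/(\omega-1)\rfloor$. Then as $\Delta\to\infty$, \[ f_t(\Delta,\omega)=(1+o(1))\,\rho_t\big(T(\Delta+a,\omega)\big)=(1+o(1))\,\frac1t\binom{\omega-1}{t-1}\Big(\frac{\Delta}{\omega-1}\Big)^{t-1}. \]
   Context: $\mathcal{G}(\Delta,\omega)$ denotes the class of finite simple graphs $G$ with maximum degree $\Delta(G)\le\Delta$ and clique number $\omega(G)\le\omega$. $k_t(G)$ is the number of copies of $K_t$ in $G$ and $\rho_t(G)=k_t(G)/|V(G)|$. $f_t(\Delta,\omega)=\sup\{\rho_t(G): G\in\mathcal{G}(\Delta,\omega),\ |V(G)|\ge 1\}$. $T(n,r)$ denotes the $r$-partite Turán graph on $n$ vertices: the complete $r$-partite graph on $n$ vertices whose part sizes are all $\lfloor n/r\rfloor$ or $\lceil n/r\rceil$ (when $n<r$ this is $K_n$). *)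

From Stdlib Require Import Reals.
From mathcomp Require Import all_boot.

Set Implicit Arguments.
Unset Strict Implicit.
Unset Printing Implicit Defensive.

Definition simple_graph (n : nat) (e : rel 'I_n) : Prop :=
  symmetric e /\ irreflexive e.

Definition deg (n : nat) (e : rel 'I_n) (x : 'I_n) : nat := #|[set y | e x y]|.

Definition is_clique (n : nat) (e : rel 'I_n) (S : {set 'I_n}) : bool :=
  [forall x in S, forall y in S, (x != y) ==> e x y].

Definition in_class (Delta omega n : nat) (e : rel 'I_n) : Prop :=
  (forall x : 'I_n, deg e x <= Delta) /\
  (forall S : {set 'I_n}, is_clique e S -> #|S| <= omega).

Definition k_t (t n : nat) (e : rel 'I_n) : nat :=
  #|[set S : {set 'I_n} | (#|S| == t) && is_clique e S]|.

Definition rho_t (t n : nat) (e : rel 'I_n) : R :=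
  Rdiv (INR (k_t t e)) (INR n).

Definition rho_set (t Delta omega : nat) : R -> Prop :=
  fun r => exists (n : nat) (e : rel 'I_n),
      0 < n /\ simple_graph e /\ in_class Delta omega e /\ r = rho_t t e.

(* Turan graph T(n, r): vertex i in part (i mod r); complete r-partite.
   Part sizes are floor(n/r) or ceil(n/r); for n < r this is K_n. *)
Definition turan_rel (n r : nat) : rel 'I_n :=
  fun i j => (nat_of_ord i %% r) != (nat_of_ord j %% r).

Arguments turan_rel : clear implicits.

Definition turan_rho (t n r : nat) : R := rho_t t (turan_rel n r).

Definition main_term (t omega Delta : nat) : R :=
  Rmult (Rmult (Rinv (INR t)) (INR 'C(omega.-1, t.-1)))
        (pow (Rdiv (INR Delta) (INR omega.-1)) t.-1).

(* Upper bound: a copy of K_t is a vertex v together with a (t-1)-clique of its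
   neighbourhood N(v), which has at most Delta vertices and clique number at most
   omega - 1.  To count such cliques, weight the vertices: moving the whole weight
   of one of two non-adjacent vertices onto the other is affine in the two weights,
   so one of the two moves does not decrease the weighted number of s-cliques
   (Zykov symmetrization).  This reduces to weights supported on a clique, where
   Maclaurin's inequality e_s(x) <= C(k, s) (sum x / k)^s applies.  Hence N(v) has
   at most C(omega-1, t-1) (Delta/(omega-1))^(t-1) cliques of size t-1, and double
   counting gives rho_t <= (1/t) C(omega-1, t-1) (Delta/(omega-1))^(t-1).
   Lower bound: T(Delta + a, omega) has maximum degree at most Delta, clique number
   at most omega and parts of size at least a, so it has at least C(omega, t) a^t
   copies of K_t, which is the main term up to a factor 1 - t/(a+1). *)

From Stdlib Require Import Reals Lra.
From mathcomp Require Import all_boot.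

Set Implicit Arguments.
Unset Strict Implicit.
Unset Printing Implicit Defensive.

Section RealBounds.

Local Open Scope R_scope.

Lemma INR_expn (m k : nat) : INR (m ^ k) = INR m ^ k.
Proof. by elim: k => [|k IH] //=; rewrite expnS mult_INR IH. Qed.

Lemma INR_ratio_le (a b c d : nat) :
  (0 < b)%N -> (0 < d)%N -> (a * d <= c * b)%N -> INR a / INR b <= INR c / INR d.
Proof.
move=> /ltP/lt_0_INR b0 /ltP/lt_0_INR d0 /leP/le_INR.
rewrite !mult_INR => h.
apply: (Rmult_le_reg_r (INR b * INR d)); first exact: Rmult_lt_0_compat.
have -> : INR a / INR b * (INR b * INR d) = INR a * INR d by field; lra.
by have -> : INR c / INR d * (INR b * INR d) = INR c * INR b by field; lra.
Qed.

Lemma main_term_ratio (t omega Delta : nat) :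
  (0 < t)%N -> (0 < omega.-1)%N ->
  main_term t omega Delta
  = INR ('C(omega.-1, t.-1) * Delta ^ t.-1) / INR (t * omega.-1 ^ t.-1).
Proof.
move=> /ltP/lt_0_INR t0 /ltP/lt_0_INR r0.
have rs0 := pow_lt _ t.-1 r0.
rewrite /main_term !mult_INR !INR_expn /Rdiv Rpow_mult_distr pow_inv; field; lra.
Qed.

Lemma main_term_mul_ratio (t omega Delta q : nat) :
  (0 < t)%N -> (0 < omega.-1)%N -> (t <= q.+1)%N ->
  main_term t omega Delta * (1 - INR t / INR q.+1)
  = INR ('C(omega.-1, t.-1) * Delta ^ t.-1 * (q.+1 - t))
    / INR (t * omega.-1 ^ t.-1 * q.+1).
Proof.
move=> t0 r0 /leP tq; have q0 := lt_0_INR _ (Nat.lt_0_succ q).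
have rs0 := pow_lt _ t.-1 (lt_0_INR _ (ssrnat.ltP r0)).
rewrite main_term_ratio // (mult_INR _ (_ - _)) minus_INR // !mult_INR !INR_expn.
field; have := lt_0_INR _ (ssrnat.ltP t0); lra.
Qed.

Lemma ratio_dist_le (L F M d : R) :
  0 < L -> L <= F -> F <= M -> M * (1 - d) <= L -> 0 <= d -> d < 1 / 2 ->
  Rabs (F / L - 1) <= d + d /\ Rabs (L / M - 1) <= d + d.
Proof.
move=> L0 LF FM ML d0 d1; have M0 : 0 < M by lra.
split.
- set w := F / L; have Fw : F = w * L by rewrite /w; field; lra.
  have w1 : 1 <= w by apply: (Rmult_le_reg_r L); lra.
  have wd : w * (1 - d) <= 1 by apply: (Rmult_le_reg_r L); nra.
  rewrite Rabs_pos_eq; nra.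
- set u := L / M; have Lu : L = u * M by rewrite /u; field; lra.
  have u1 : u <= 1 by apply: (Rmult_le_reg_r M); lra.
  have ud : 1 - d <= u by apply: (Rmult_le_reg_r M); lra.
  rewrite Rabs_left1; lra.
Qed.

Lemma Un_cv_of_dist_le (u d : nat -> R) (l : R) (N : nat) :
  (forall k, (N <= k)%N -> Rabs (u k - l) <= d k) -> Un_cv d 0 -> Un_cv u l.
Proof.
move=> ud hd eps eps0; have [N' hN'] := hd eps eps0.
exists (maxn N N') => k /leP; rewrite geq_max => /andP[kN kN'].
have := hN' k (leP kN'); rewrite /R_dist Rminus_0_r => dk.
exact: Rle_lt_trans (ud k kN) (Rle_lt_trans _ _ _ (Rle_abs _) dk).
Qed.

Lemma Un_cv_div_succ_divn (c : R) (r : nat) :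
  (0 < r)%N -> Un_cv (fun k => c / INR (k %/ r).+1) 0.
Proof.
move=> r0 eps eps0; have c1 := Rle_lt_0_plus_1 _ (Rabs_pos c).
have [N [invN /lt_0_INR N0]] :=
  archimed_cor1 (eps / (Rabs c + 1)) (Rdiv_lt_0_compat _ _ eps0 c1).
have invN' : / INR N * (Rabs c + 1) < eps.
  have := Rmult_lt_compat_r _ _ _ c1 invN.
  by rewrite /Rdiv Rmult_assoc Rinv_l ?Rmult_1_r //; lra.
exists (N * r)%N => k /leP kN; rewrite /R_dist Rminus_0_r S_INR.
have qN : (N <= k %/ r)%N by rewrite leq_divRL.
have qN' := le_INR _ _ (leP qN).
have inv_le : / (INR (k %/ r) + 1) <= / INR N by apply: Rinv_le_contravar; lra.
have inv0 : 0 < / (INR (k %/ r) + 1) by apply: Rinv_0_lt_compat; lra.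
rewrite /Rdiv Rabs_mult (Rabs_pos_eq (/ _)); nra.
Qed.

Lemma sandwich_ratios_cv (L F M d : nat -> R) (N : nat) :
  (forall k, (N <= k)%N ->
     [/\ 0 < L k, L k <= F k, F k <= M k, M k * (1 - d k) <= L k & 0 <= d k]) ->
  Un_cv d 0 ->
  Un_cv (fun k => F k / L k) 1 /\ Un_cv (fun k => L k / M k) 1.
Proof.
move=> bounds hd; have [N' small] := hd (1 / 2) ltac:(lra).
have dd : Un_cv (fun k => d k + d k) 0 by rewrite -(Rplus_0_r 0); apply: CV_plus.
have dist k : (maxn N N' <= k)%N ->
    Rabs (F k / L k - 1) <= d k + d k /\ Rabs (L k / M k - 1) <= d k + d k.
  rewrite geq_max => /andP[kN kN'].
  have [L0 LF FM ML d0] := bounds k kN.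
  have := small k (leP kN'); rewrite /R_dist Rminus_0_r Rabs_pos_eq // => d1.
  exact: ratio_dist_le.
by split; apply: (Un_cv_of_dist_le (N := maxn N N')) dd => k /dist[].
Qed.

End RealBounds.

(* Imported only here: mathcomp's [ring] shadows Stdlib's [ring] and [field] on [R]. *)
From mathcomp Require Import all_order all_algebra perm ring.

Import Order.TTheory GRing.Theory Num.Theory.

Section PairSplit.

Local Open Scope ring_scope.

Variables (R : comNzRingType) (T : finType).

Lemma prod_setD1_if (z : T -> R) (a : T) (S : {set T}) :
  \prod_(i in S) z i = (if a \in S then z a else 1) * \prod_(i in S :\ a) z i.
Proof.
case: ifP => aS; first by rewrite (big_setD1 _ aS).
rewrite mul1r; apply: eq_bigl => i; rewrite !inE.
by case: eqVneq => // ->; rewrite aS.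
Qed.

Variables (P : pred {set T}) (a b : T).
Hypothesis neq_ab : a != b.

Definition pair_coef (z : T -> R) (ina inb : bool) : R :=
  \sum_(S | [&& P S, (a \in S) == ina & (b \in S) == inb])
     \prod_(i in S :\ a :\ b) z i.

Lemma sum_prod_pair_split (z : T -> R) :
  \sum_(S | P S) \prod_(i in S) z i =
    \sum_(ina : bool) \sum_(inb : bool)
       (if ina then z a else 1) * (if inb then z b else 1) * pair_coef z ina inb.
Proof.
have prodE (S : {set T}) : \prod_(i in S) z i =
    (if a \in S then z a else 1) * (if b \in S then z b else 1)
    * \prod_(i in S :\ a :\ b) z i.
  rewrite (prod_setD1_if z a) (prod_setD1_if z b) mulrA.
  by rewrite in_setD1 eq_sym neq_ab.
rewrite (partition_big (fun S : {set T} => (a \in S, b \in S)) xpredT) //=.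
rewrite pair_big /=; apply: eq_bigr => -[ina inb] _ /=.
rewrite /pair_coef mulr_sumr /=.
apply: eq_big => [S|S].
  by rewrite xpair_eqE.
by rewrite xpair_eqE => /and3P[_ /eqP <- /eqP <-]; rewrite prodE.
Qed.

Lemma eq_pair_coef (y z : T -> R) (ina inb : bool) :
  (forall i, i != a -> i != b -> y i = z i) ->
  pair_coef y ina inb = pair_coef z ina inb.
Proof.
move=> yz; apply: eq_bigr => S _; apply: eq_bigr => i.
by rewrite !in_setD1 => /and3P[ib ia _]; apply: yz.
Qed.

Definition reweight2 (z : T -> R) (p q : R) (i : T) : R :=
  if i == a then p else if i == b then q else z i.

Lemma reweight2_fst (z : T -> R) (p q : R) : reweight2 z p q a = p.
Proof. by rewrite /reweight2 eqxx. Qed.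

Lemma reweight2_snd (z : T -> R) (p q : R) : reweight2 z p q b = q.
Proof. by rewrite /reweight2 eq_sym (negbTE neq_ab) eqxx. Qed.

Lemma reweight2_other (z : T -> R) (p q : R) (i : T) :
  i != a -> i != b -> reweight2 z p q i = z i.
Proof. by rewrite /reweight2 => /negbTE -> /negbTE ->. Qed.

Lemma sum_reweight2 (K : pred T) (z : T -> R) (p q : R) :
  K a -> K b -> p + q = z a + z b ->
  \sum_(i | K i) reweight2 z p q i = \sum_(i | K i) z i.
Proof.
move=> aK bK pq.
have bKa : K b && (b != a) by rewrite bK eq_sym neq_ab.
rewrite !(bigD1 a aK) !(bigD1 b bKa) /= reweight2_fst reweight2_snd.
rewrite !addrA pq; congr (_ + _); apply: eq_bigr => i /andP[/andP[_ ia] ib].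
exact: reweight2_other.
Qed.

End PairSplit.

Section Maclaurin.

Local Open Scope ring_scope.

Variables (R : realFieldType) (T : finType).

Definition draws (K : {set T}) (s : nat) : pred {set T} :=
  fun S => (S \subset K) && (#|S| == s).

Definition elem_sym (K : {set T}) (s : nat) (x : T -> R) : R :=
  \sum_(S | draws K s S) \prod_(i in S) x i.

Variables (K : {set T}) (s : nat).

Lemma mem_tperm (a b i : T) :
  a \in K -> b \in K -> (tperm a b i \in K) = (i \in K).
Proof. by move=> aK bK; case: tpermP => [->|->|] //; rewrite aK bK. Qed.

Lemma draws_preim_tperm (a b : T) (S : {set T}) :
  a \in K -> b \in K -> draws K s (tperm a b @^-1: S) = draws K s S.
Proof.
move=> aK bK; rewrite /draws card_preimset; last exact: perm_inj.
congr (_ && _); apply/subsetP/subsetP => SK i.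
  by move=> iS; rewrite -(mem_tperm i aK bK); apply: SK; rewrite inE tpermK.
by rewrite inE => /SK; rewrite mem_tperm.
Qed.

Lemma pair_coef_draws_swap (x : T -> R) (a b : T) :
  a \in K -> b \in K -> a != b ->
  pair_coef (draws K s) a b x true false = pair_coef (draws K s) a b x false true.
Proof.
move=> aK bK ab.
have preimK : involutive (fun S : {set T} => tperm a b @^-1: S).
  by move=> S; apply/setP => i; rewrite !inE tpermK.
rewrite /pair_coef [RHS](reindex_inj (inv_inj preimK)) /=.
apply: eq_big => [S|S _].
  rewrite draws_preim_tperm // !inE tpermL tpermR.
  by case: (a \in S); case: (b \in S); rewrite ?andbF ?andbT.
apply: eq_bigl => i; rewrite !in_setD1 inE.
by case: (eqVneq i b) => [|ib]; case: (eqVneq i a) => [|ia] //=; rewrite tpermD // eq_sym.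
Qed.

Lemma elem_sym_smooth (x : T -> R) (a b : T) (mu : R) :
  a \in K -> b \in K -> a != b -> (forall i, i \in K -> 0 <= x i) ->
  x a <= mu -> mu <= x b ->
  elem_sym K s x <= elem_sym K s (reweight2 a b x mu (x a + x b - mu)).
Proof.
move=> aK bK ab x0 xa_mu mu_xb.
rewrite /elem_sym !(sum_prod_pair_split _ ab) !big_bool /=.
(* The smoothing keeps [x a + x b] and does not decrease [x a * x b]. *)
rewrite !(eq_pair_coef _ _ _ (reweight2_other x _ _)).
rewrite reweight2_fst (reweight2_snd ab) (pair_coef_draws_swap _ aK bK ab).
set D := pair_coef _ _ _ _ true true.
have D0 : 0 <= D.
  apply: sumr_ge0 => S /and3P[/andP[/subsetP SK _] _ _].
  apply: prodr_ge0 => i; rewrite !in_setD1 => /and3P[_ _ /SK]; exact: x0.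
rewrite -subr_ge0 (_ : _ - _ = (mu - x a) * (x b - mu) * D); last by ring.
by rewrite !mulr_ge0 // subr_ge0.
Qed.

Lemma exists_below_above_mean (x : T -> R) (mu : R) (j : T) :
  j \in K -> x j != mu -> \sum_(i in K) x i = #|K|%:R * mu ->
  exists a b, [/\ a \in K, b \in K, x a < mu & mu < x b].
Proof.
move=> jK xj sum_x.
have dev0 : \sum_(i in K) (x i - mu) = 0.
  by rewrite sumrB sum_x sumr_const mulr_natl subrr.
have dev0' : \sum_(i in K) (mu - x i) = 0.
  by rewrite sumrB sum_x sumr_const mulr_natl subrr.
have [a aK xa] : exists2 a, a \in K & x a < mu.
  apply/exists_inP; apply: contraR xj => /exists_inPn x_ge.
  have ge0 i : i \in K -> 0 <= x i - mu by move=> iK; rewrite subr_ge0 leNgt x_ge.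
  by rewrite -subr_eq0 (psumr_eq0P ge0 dev0).
have [b bK xb] : exists2 b, b \in K & mu < x b.
  apply/exists_inP; apply: contraR xj => /exists_inPn x_le.
  have le0 i : i \in K -> 0 <= mu - x i by move=> iK; rewrite subr_ge0 leNgt x_le.
  by rewrite eq_sym -subr_eq0 (psumr_eq0P le0 dev0').
by exists a, b.
Qed.

Lemma elem_sym_le_mean (x : T -> R) (mu : R) :
  (forall i, i \in K -> 0 <= x i) -> \sum_(i in K) x i = #|K|%:R * mu ->
  elem_sym K s x <= 'C(#|K|, s)%:R * mu ^+ s.
Proof.
have [m] := ubnP #|[set i in K | x i != mu]|.
elim: m x => // m IH x; rewrite ltnS => hm x0 sum_x.
have [/forall_inP x_mu | /forall_inPn [j jK xj]] := boolP [forall i in K, x i == mu].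
  suff -> : elem_sym K s x = \sum_(S in [set S : {set T} | S \subset K & #|S| == s]) mu ^+ s.
    by rewrite sumr_const cards_draws mulr_natl.
  apply: eq_big => [S|S /andP[/subsetP SK /eqP <-]]; first by rewrite inE.
  by rewrite -prodr_const; apply: eq_bigr => i /SK /x_mu /eqP.
have [a [b [aK bK xa xb]]] := exists_below_above_mean jK xj sum_x.
have ab : a != b by apply: contraTneq xa => ->; rewrite -leNgt ltW.
set y := reweight2 a b x mu (x a + x b - mu).
apply: le_trans (elem_sym_smooth aK bK ab x0 (ltW xa) (ltW xb)) _.
apply: IH.
- apply: leq_trans hm.
  rewrite (cardsD1 a [set i in K | x i != mu]) inE aK (lt_eqF xa) add1n ltnS.
  apply: subset_leq_card; apply/subsetP => i; rewrite !inE => /andP[iK yi].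
  have [ia|ia] := eqVneq i a; first by rewrite ia /y reweight2_fst eqxx in yi.
  have [ib|ib] := eqVneq i b; first by rewrite ib bK (gt_eqF xb).
  by rewrite iK -(reweight2_other x mu (x a + x b - mu) ia ib).
- move=> i iK; have [->|ia] := eqVneq i a.
    by rewrite /y reweight2_fst (le_trans (x0 a aK) (ltW xa)).
  have [->|ib] := eqVneq i b.
    by rewrite /y (reweight2_snd ab) -addrA addr_ge0 ?x0 // subr_ge0 ltW.
  by rewrite /y reweight2_other ?x0.
- by rewrite /y (sum_reweight2 ab) // addrC subrK.
Qed.

Lemma maclaurin (x : T -> R) :
  (0 < #|K|)%N -> (forall i, i \in K -> 0 <= x i) ->
  elem_sym K s x * #|K|%:R ^+ s <= 'C(#|K|, s)%:R * (\sum_(i in K) x i) ^+ s.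
Proof.
move=> K0 x0.
have k0 : (#|K|%:R : R) != 0 by rewrite pnatr_eq0 -lt0n.
set mu := (\sum_(i in K) x i) / #|K|%:R.
have sum_x : \sum_(i in K) x i = #|K|%:R * mu by rewrite /mu mulrC divfK.
rewrite sum_x exprMn mulrCA [X in X <= _]mulrC ler_wpM2l ?exprn_ge0 ?ler0n //.
exact: elem_sym_le_mean.
Qed.

End Maclaurin.

Lemma leq_ffact_ratio (k r s : nat) :
  (k <= r)%N -> (k ^_ s * r ^ s <= r ^_ s * k ^ s)%N.
Proof.
move=> kr; elim: s => [|s IH]; first by rewrite !ffactn0 !expn0.
rewrite !ffactnSr !expnSr mulnACA [X in (_ <= X)%N]mulnACA leq_mul //.
by rewrite !mulnBl mulnC leq_sub2l // leq_mul2l kr orbT.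
Qed.

Lemma leq_bin_ratio (k r s : nat) :
  (k <= r)%N -> ('C(k, s) * r ^ s <= 'C(r, s) * k ^ s)%N.
Proof.
move=> kr; rewrite -(leq_pmul2r (fact_gt0 s)) mulnAC bin_ffact.
by rewrite [X in (_ <= X)%N]mulnAC bin_ffact leq_ffact_ratio.
Qed.

Lemma is_clique_sub (n : nat) (e : rel 'I_n) (K S : {set 'I_n}) :
  is_clique e K -> S \subset K -> is_clique e S.
Proof.
move=> /forall_inP cK /subsetP SK; apply/forall_inP => x xS.
by apply/forall_inP => y yS; have /forall_inP := cK x (SK x xS); apply; apply: SK.
Qed.

Section CliqueSum.

Local Open Scope ring_scope.

Variables (R : realFieldType) (n : nat) (e : rel 'I_n).

Definition clique_sum (s : nat) (z : 'I_n -> R) : R :=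
  \sum_(S : {set 'I_n} | (#|S| == s) && is_clique e S) \prod_(i in S) z i.

Definition supp (z : 'I_n -> R) : {set 'I_n} := [set i | z i != 0].

Lemma clique_sum_supp_clique (s : nat) (z : 'I_n -> R) :
  is_clique e (supp z) -> clique_sum s z = elem_sym (supp z) s z.
Proof.
move=> cK; rewrite /clique_sum (bigID (fun S : {set 'I_n} => S \subset supp z)) /=.
rewrite [X in _ + X]big1 ?addr0 => [|S /andP[_ /subsetPn[i iS]]]; last first.
  by rewrite (big_setD1 _ iS) /= inE negbK => /eqP ->; rewrite mul0r.
apply: eq_bigl => S; rewrite /draws andbC; case: (boolP (S \subset supp z)) => //= SK.
by rewrite (is_clique_sub cK SK) andbT.
Qed.

Lemma clique_sum_le_supp_clique (r s : nat) (z : 'I_n -> R) :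
  (0 < s)%N -> (forall i, 0 <= z i) -> (#|supp z| <= r)%N ->
  is_clique e (supp z) ->
  clique_sum s z * r%:R ^+ s <= 'C(r, s)%:R * (\sum_i z i) ^+ s.
Proof.
move=> s0 z0 kr cK; rewrite clique_sum_supp_clique //.
have sumE : \sum_i z i = \sum_(i in supp z) z i.
  rewrite (bigID (mem (supp z))) /= [X in _ + X]big1 ?addr0 //.
  by move=> i; rewrite inE negbK => /eqP.
have [k0|kpos] := posnP #|supp z|.
  rewrite /elem_sym big_pred0 ?mul0r ?mulr_ge0 ?exprn_ge0 ?sumr_ge0 // => S.
  apply/negP => /andP[/subset_leq_card]; rewrite k0 leqn0 => /eqP -> /eqP s0'.
  by rewrite -s0' in s0.
have kp : (0 : R) < #|supp z|%:R ^+ s by rewrite exprn_gt0 ?ltr0n.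
rewrite -(ler_pM2r kp) mulrAC.
apply: le_trans (_ : 'C(#|supp z|, s)%:R * (\sum_i z i) ^+ s * r%:R ^+ s <= _).
  by rewrite ler_wpM2r ?exprn_ge0 ?ler0n // sumE maclaurin.
rewrite mulrAC [X in _ <= X]mulrAC ler_wpM2r ?exprn_ge0 ?sumr_ge0 //.
by rewrite -!natrX -!natrM ler_nat leq_bin_ratio.
Qed.

Lemma pair_coef_nonedge (s : nat) (z : 'I_n -> R) (u v : 'I_n) :
  u != v -> ~~ e u v ->
  pair_coef (fun S => (#|S| == s) && is_clique e S) u v z true true = 0.
Proof.
move=> uv nuv; apply: big_pred0 => S.
apply/negP => /and3P[/andP[_ /forall_inP cS] /eqP uS /eqP vS].
by have /forall_inP/(_ v vS) := cS u uS; rewrite uv (negbTE nuv).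
Qed.

Lemma clique_sum_shift (s : nat) (z : 'I_n -> R) (u v : 'I_n) :
  u != v -> ~~ e u v -> 0 <= z u -> 0 <= z v ->
  clique_sum s z <= clique_sum s (reweight2 u v z (z u + z v) 0) \/
  clique_sum s z <= clique_sum s (reweight2 v u z (z v + z u) 0).
Proof.
move=> uv nuv zu0 zv0.
pose P := fun S : {set 'I_n} => (#|S| == s) && is_clique e S.
pose B ina inb := pair_coef P u v z ina inb.
(* No clique contains both [u] and [v], so [clique_sum] is affine in [(z u, z v)]. *)
have clique_sumE (y : 'I_n -> R) : (forall i, i != u -> i != v -> y i = z i) ->
    clique_sum s y = B false false + y u * B true false + y v * B false true.
  move=> yz; rewrite /clique_sum (sum_prod_pair_split P uv) !big_bool /=.
  by rewrite !(eq_pair_coef _ _ _ yz) (pair_coef_nonedge _ _ uv nuv) /B; ring.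
have vu : v != u by rewrite eq_sym.
rewrite (clique_sumE z) // !clique_sumE => [|i iu iv|i iu iv]; last 2 first.
- exact: reweight2_other.
- exact: reweight2_other.
rewrite reweight2_fst (reweight2_snd uv) reweight2_fst (reweight2_snd vu).
have [le_B|lt_B] := lerP (B false true) (B true false); [left|right].
  rewrite -subr_ge0 (_ : _ - _ = z v * (B true false - B false true)); last by ring.
  by rewrite mulr_ge0 // subr_ge0.
rewrite -subr_ge0 (_ : _ - _ = z u * (B false true - B true false)); last by ring.
by rewrite mulr_ge0 // subr_ge0 ltW.
Qed.

Lemma clique_sum_le (r s : nat) (z : 'I_n -> R) :
  (0 < s)%N -> (forall i, 0 <= z i) ->
  (forall S, is_clique e S -> S \subset supp z -> (#|S| <= r)%N) ->
  clique_sum s z * r%:R ^+ s <= 'C(r, s)%:R * (\sum_i z i) ^+ s.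
Proof.
move=> s0; have [m] := ubnP #|supp z|.
elim: m z => // m IH z; rewrite ltnS => hm z0 hcl.
have [cK|] := boolP (is_clique e (supp z)).
  by apply: clique_sum_le_supp_clique => //; apply: hcl.
move=> /forall_inPn[u uS /forall_inPn[v vS]]; rewrite negb_imply => /andP[uv nuv].
have shift_le a b : a \in supp z -> b \in supp z -> a != b ->
    clique_sum s (reweight2 a b z (z a + z b) 0) * r%:R ^+ s
    <= 'C(r, s)%:R * (\sum_i z i) ^+ s.
  move=> aS bS ab; set y := reweight2 a b z _ _.
  have supp_y : supp y \subset supp z :\ b.
    apply/subsetP => i; rewrite !inE.
    have [->|ib] := eqVneq i b; first by rewrite /y (reweight2_snd ab) eqxx.
    have [->|ia] := eqVneq i a; first by rewrite inE in aS; rewrite aS.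
    by rewrite /y reweight2_other.
  have sum_y : \sum_i y i = \sum_i z i.
    by rewrite (sum_reweight2 ab) ?addr0.
  rewrite -sum_y; apply: IH.
  - apply: leq_trans hm; apply: leq_ltn_trans (subset_leq_card supp_y) _.
    by rewrite (cardsD1 b (supp z)) bS.
  - move=> i; have [->|ia] := eqVneq i a; first by rewrite /y reweight2_fst addr_ge0.
    have [->|ib] := eqVneq i b; first by rewrite /y (reweight2_snd ab).
    by rewrite /y reweight2_other.
  - move=> S cS /subset_trans /(_ supp_y) Sz; apply: hcl => //.
    by apply: subset_trans Sz (subD1set _ _).
have r0 : (0 : R) <= r%:R ^+ s by rewrite exprn_ge0 ?ler0n.
case: (clique_sum_shift s uv nuv (z0 u) (z0 v)) => le_shift.
  exact: le_trans (ler_wpM2r r0 le_shift) (shift_le u v uS vS uv).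
by apply: le_trans (ler_wpM2r r0 le_shift) (shift_le v u vS uS _); rewrite eq_sym.
Qed.

End CliqueSum.

Section CliqueCounting.

Local Open Scope nat_scope.

Variables (n : nat) (e : rel 'I_n).

Definition cliques_in (s : nat) (A : {set 'I_n}) : {set {set 'I_n}} :=
  [set S : {set 'I_n} | [&& #|S| == s, is_clique e S & S \subset A]].

Lemma card_cliques_in_le (A : {set 'I_n}) (r s : nat) :
  0 < s -> (forall S, is_clique e S -> S \subset A -> #|S| <= r) ->
  #|cliques_in s A| * r ^ s <= 'C(r, s) * #|A| ^ s.
Proof.
move=> s0 hcl.
pose x i : rat := if i \in A then 1%R else 0%R.
have x0 i : (0 <= x i)%R by rewrite /x; case: (i \in A).
have supp_x : supp x = A by apply/setP => i; rewrite inE /x; case: (i \in A).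
have := clique_sum_le (e := e) (r := r) s0 x0; rewrite supp_x => /(_ hcl).
have -> : clique_sum e s x = (#|cliques_in s A|%:R)%R.
  rewrite /clique_sum (eq_bigr (fun S : {set 'I_n} => if S \subset A then 1%R else 0%R : rat)).
    by rewrite -big_mkcondr -sumr_const; apply: eq_bigl => S; rewrite inE andbA.
  move=> S _; case: ifP => SA; first by apply: big1 => i /(subsetP SA) iA; rewrite /x iA.
  have [i iS iA] := subsetPn (negbT SA).
  by rewrite (big_setD1 _ iS) /= /x (negbTE iA) mul0r.
have -> : (\sum_i x i = #|A|%:R)%R by rewrite /x -big_mkcond sumr_const.
by rewrite -!natrX -!natrM ler_nat.
Qed.

Definition nbhd (v : 'I_n) : {set 'I_n} := [set y | e v y].

Lemma mul_k_t_le_sum_nbhd (t : nat) :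
  0 < t -> t * k_t t e <= \sum_v #|cliques_in t.-1 (nbhd v)|.
Proof.
move=> t0; set Kt := [set S : {set 'I_n} | (#|S| == t) && is_clique e S].
have -> : t * k_t t e = \sum_(S in Kt) \sum_v (if v \in S then 1 else 0).
  rewrite /k_t -/Kt mulnC -sum_nat_const; apply: eq_bigr => S.
  by rewrite inE => /andP[/eqP St _]; rewrite -big_mkcond /= sum1_card St.
rewrite exchange_big /=; apply: leq_sum => v _.
rewrite -big_mkcondr /= (_ : \sum_(S in Kt | v \in S) 1 = #|[set S in Kt | v \in S]|);
  last by rewrite -sum1_card; apply: eq_bigl => S; rewrite !inE.
have inj : {in [set S in Kt | v \in S] &, injective (fun S : {set 'I_n} => S :\ v)}.
  move=> S1 S2; rewrite !inE => /andP[_ v1] /andP[_ v2] E.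
  by rewrite -(setD1K v1) -(setD1K v2) E.
rewrite -(card_in_imset inj); apply: subset_leq_card.
apply/subsetP => T /imsetP[S]; rewrite !inE => /andP[/andP[/eqP St cS] vS] ->.
rewrite (is_clique_sub cS (subD1set S v)) /=; apply/andP; split.
  by have := cardsD1 v S; rewrite vS St add1n => ->.
apply/subsetP => y; rewrite !inE => /andP[yv yS].
by have /forall_inP := forall_inP cS v vS => /(_ y yS); rewrite eq_sym yv.
Qed.

Lemma nbhd_clique_le (omega : nat) (v : 'I_n) (S : {set 'I_n}) :
  simple_graph e -> (forall S, is_clique e S -> #|S| <= omega) ->
  is_clique e S -> S \subset nbhd v -> #|S| <= omega.-1.
Proof.
move=> [esym eirr] hcl cS /subsetP SN.
have vS : v \notin S by apply/negP => /SN; rewrite inE eirr.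
have cvS : is_clique e (v |: S).
  apply/forall_inP => x /setU1P[-> | xS]; apply/forall_inP => y /setU1P[-> | yS];
    apply/implyP => xy.
  - by rewrite eqxx in xy.
  - by have := SN y yS; rewrite inE.
  - by have := SN x xS; rewrite inE esym.
  - by have /forall_inP := forall_inP cS x xS => /(_ y yS); rewrite xy.
by have := hcl _ cvS; rewrite cardsU1 vS add1n => h; rewrite -ltnS (leq_trans h) // leqSpred.
Qed.

Lemma k_t_upper (t omega Delta : nat) :
  1 < t -> simple_graph e -> in_class Delta omega e ->
  t * k_t t e * omega.-1 ^ t.-1 <= n * 'C(omega.-1, t.-1) * Delta ^ t.-1.
Proof.
move=> t1 sg [hdeg hcl].
have s0 : 0 < t.-1 by rewrite -ltnS prednK // ltnW.
apply: leq_trans (_ : (\sum_v #|cliques_in t.-1 (nbhd v)|) * omega.-1 ^ t.-1 <= _).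
  by rewrite leq_mul2r mul_k_t_le_sum_nbhd ?orbT // ltnW.
rewrite big_distrl /= -mulnA -[X in _ <= X * _]card_ord -sum_nat_const; apply: leq_sum => v _.
apply: leq_trans (card_cliques_in_le s0 _) _; first by move=> S; apply: nbhd_clique_le.
by rewrite leq_mul2l leq_exp2r ?hdeg ?orbT.
Qed.

End CliqueCounting.

Section TuranGraph.

Local Open Scope nat_scope.

Variables (n omega : nat).

Lemma turan_rel_simple : simple_graph (turan_rel n omega).
Proof. by split=> [i j|i]; rewrite /turan_rel ?eqxx // eq_sym. Qed.

Lemma turan_clique_le (S : {set 'I_n}) :
  0 < omega -> is_clique (turan_rel n omega) S -> #|S| <= omega.
Proof.
move=> w0 cS; pose part (i : 'I_n) : 'I_omega := Ordinal (ltn_pmod i w0).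
have inj : {in S &, injective part}.
  move=> i j iS jS /(congr1 val) /= /eqP ij; apply: contraTeq ij => neq_ij.
  by have /forall_inP := forall_inP cS i iS => /(_ j jS); rewrite neq_ij.
by rewrite -(card_in_imset inj) (leq_trans (max_card _)) ?card_ord.
Qed.

Lemma modn_ord_addM (c : 'I_omega) (k : nat) : (c + omega * k) %% omega = c.
Proof. by rewrite addnC mulnC modnMDl modn_small. Qed.

Lemma divn_ord_addM (c : 'I_omega) (k : nat) : (c + omega * k) %/ omega = k.
Proof.
have w0 : 0 < omega by apply: leq_ltn_trans (ltn_ord c).
by rewrite addnC mulnC divnMDl // divn_small // addn0.
Qed.

Variable q : nat.
Hypothesis parts_q : omega * q <= n.

Lemma turan_cell_lt (c : 'I_omega) (k : 'I_q) : c + omega * k < n.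
Proof.
apply: leq_trans parts_q; apply: leq_trans (_ : omega * k.+1 <= _).
  by rewrite mulnS ltn_add2r.
by rewrite leq_mul2l ltn_ord orbT.
Qed.

Definition turan_cell (c : 'I_omega) (k : 'I_q) : 'I_n := Ordinal (turan_cell_lt c k).

Lemma turan_cell_inj (c c' : 'I_omega) (k k' : 'I_q) :
  turan_cell c k = turan_cell c' k' -> c = c' /\ k = k'.
Proof.
move=> /(congr1 val) /= E; split; apply: val_inj.
  by have := congr1 (modn^~ omega) E; rewrite /= !modn_ord_addM.
by have := congr1 (divn^~ omega) E; rewrite /= !divn_ord_addM.
Qed.

Lemma turan_deg_le (i : 'I_n) : 0 < omega -> deg (turan_rel n omega) i <= n - q.
Proof.
move=> w0; set Y := [set j : 'I_n | i %% omega == j %% omega].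
have qY : q <= #|Y|.
  pose c : 'I_omega := Ordinal (ltn_pmod i w0).
  have inj : injective (turan_cell c) by move=> k k' /turan_cell_inj[].
  rewrite -[q]card_ord -(card_imset _ inj); apply: subset_leq_card.
  by apply/subsetP => j /imsetP[k _ ->]; rewrite inE /= addnC mulnC modnMDl modn_mod.
have -> : deg (turan_rel n omega) i = #|~: Y| by apply: eq_card => j; rewrite !inE.
by rewrite cardsCs card_ord leq_sub2l // setCK.
Qed.

Lemma k_t_turan_ge (t : nat) :
  0 < q -> 'C(omega, t) * q ^ t <= k_t t (turan_rel n omega).
Proof.
move=> q0; pose k0 : 'I_q := Ordinal q0.
pose D := [set p : {set 'I_omega} * {ffun 'I_omega -> 'I_q} |
            (#|p.1| == t) && (p.2 \in pffun_on k0 p.1 [set: 'I_q])].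
pose clique_of (p : {set 'I_omega} * {ffun 'I_omega -> 'I_q}) :=
  [set turan_cell c (p.2 c) | c in p.1].
have card_D : #|D| = 'C(omega, t) * q ^ t.
  rewrite -sum1_card; under eq_bigl do rewrite inE.
  rewrite -(pair_big_dep (fun R : {set 'I_omega} => #|R| == t)
            (fun R f => f \in pffun_on k0 R [set: 'I_q]) (fun _ _ => 1)) /=.
  rewrite (eq_bigr (fun _ => q ^ t)) => [|R /eqP Rt]; last first.
    by rewrite sum1_card card_pffun_on cardsT card_ord Rt.
  rewrite sum_nat_const; congr (_ * _).
  by rewrite -[X in 'C(X, _)]card_ord -card_draws; apply: eq_card => R; rewrite inE.
have clique_ofP p : p \in D ->
    clique_of p \in [set S : {set 'I_n} | (#|S| == t) && is_clique (turan_rel n omega) S].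
  case: p => R f; rewrite !inE /= => /andP[/eqP Rt _].
  have inj : {in R &, injective (fun c => turan_cell c (f c))}.
    by move=> c c' _ _ /turan_cell_inj[].
  rewrite (card_in_imset inj) Rt eqxx /=.
  apply/forall_inP => _ /imsetP[c cR ->]; apply/forall_inP => _ /imsetP[c' cR' ->].
  apply/implyP => ne; rewrite /turan_rel /= !modn_ord_addM.
  by apply: contraNneq ne => /val_inj ->.
have clique_of_inj : {in D &, injective clique_of}.
  move=> [R1 f1] [R2 f2]; rewrite !inE /=.
  move=> /andP[_ /pffun_onP[s1 _]] /andP[_ /pffun_onP[s2 _]] E.
  have sub (R R' : {set 'I_omega}) (f f' : {ffun 'I_omega -> 'I_q}) :
      [set turan_cell c (f c) | c in R] = [set turan_cell c (f' c) | c in R'] ->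
      forall c, c \in R -> c \in R' /\ f c = f' c.
    move=> E' c cR; have : turan_cell c (f c) \in [set turan_cell c (f' c) | c in R'].
      by rewrite -E'; apply: imset_f.
    by case/imsetP=> c' cR' /turan_cell_inj[-> ->].
  have R12 : R1 = R2.
    by apply/setP => c; apply/idP/idP => [/(sub _ _ _ _ E)[]|/(sub _ _ _ _ (esym E))[]].
  subst R2; congr (_, _); apply/ffunP => c.
  have [cR|cR] := boolP (c \in R1); first by case: (sub _ _ _ _ E c cR).
  have outside (f : {ffun 'I_omega -> 'I_q}) : k0.-support f \subset R1 -> f c = k0.
    by move=> /subsetP sf; apply/eqP; apply: contraNT cR => ne; apply: sf; rewrite inE.
  by rewrite (outside _ s1) (outside _ s2).
rewrite -card_D -(card_in_imset clique_of_inj) /k_t; apply: subset_leq_card.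
by apply/subsetP => S /imsetP[p pD ->]; apply: clique_ofP.
Qed.

End TuranGraph.

Section TuranEstimate.

Local Open Scope nat_scope.

Lemma leq_expS_sub (q t : nat) : q.+1 ^ t * (q.+1 - t) <= q ^ t * q.+1.
Proof.
elim: t => [|t IH]; first by rewrite !expn0 !mul1n subn0.
have step : q.+1 * (q.+1 - t.+1) <= q * (q.+1 - t).
  case: (leqP t q) => tq; first by rewrite subSS subSn // mulSn mulnS leq_add2r leq_subr.
  by rewrite subSS (_ : q - t = 0) ?muln0 //; apply/eqP; rewrite subn_eq0 ltnW.
rewrite expnSr -mulnA (leq_trans (leq_mul (leqnn _) step)) //.
by rewrite expnS mulnCA -mulnA leq_mul2l IH orbT.
Qed.

Lemma main_term_le_k_t (t r q Delta k : nat) :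
  0 < t -> Delta <= r * q.+1 -> 'C(r.+1, t) * q ^ t <= k ->
  'C(r, t.-1) * Delta ^ t.-1 * (q.+1 - t) * (Delta + q) <= k * (t * r ^ t.-1 * q.+1).
Proof.
move=> t0 hD hk; set s := t.-1; have ts : t = s.+1 by rewrite prednK.
have bin_rt : r.+1 * 'C(r, s) = t * 'C(r.+1, t) by rewrite ts -mul_bin_diag.
have hn : Delta + q <= r.+1 * q.+1 by rewrite mulSn addnC leq_add.
apply: leq_trans (_ : 'C(r, s) * (r * q.+1) ^ s * (q.+1 - t) * (r.+1 * q.+1) <= _).
  have exp_mono e : Delta ^ e <= (r * q.+1) ^ e.
    by elim: e => // e IH; rewrite !expnS leq_mul.
  by rewrite !leq_mul.
have -> : 'C(r, s) * (r * q.+1) ^ s * (q.+1 - t) * (r.+1 * q.+1) =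
    r.+1 * 'C(r, s) * r ^ s * (q.+1 ^ t * (q.+1 - t)).
  by rewrite ts expnS expnMn; ring.
apply: leq_trans (_ : r.+1 * 'C(r, s) * r ^ s * (q ^ t * q.+1) <= _).
  by rewrite leq_mul2l leq_expS_sub orbT.
rewrite bin_rt (_ : _ * _ = 'C(r.+1, t) * q ^ t * (t * r ^ s * q.+1)); last by ring.
by rewrite leq_mul2r hk orbT.
Qed.

End TuranEstimate.

Section Bounds.

Local Open Scope nat_scope.
Local Open Scope R_scope.

Lemma rho_t_le_main_term (t omega Delta n : nat) (e : rel 'I_n) :
  (1 < t)%N -> (t <= omega)%N -> (0 < n)%N -> simple_graph e -> in_class Delta omega e ->
  rho_t t e <= main_term t omega Delta.
Proof.
move=> t1 tw n0 sg ic; have t0 := ltnW t1.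
have r0 : (0 < omega.-1)%N by rewrite -ltnS prednK // (leq_trans _ tw) // ltnW.
rewrite /rho_t main_term_ratio //; apply: INR_ratio_le => //.
  by rewrite muln_gt0 t0 expn_gt0 r0.
by rewrite mulnCA mulnA [X in (_ <= X)%N]mulnC mulnA k_t_upper.
Qed.

Lemma turan_rho_in_rho_set (t omega Delta : nat) :
  (1 < omega)%N -> (0 < Delta)%N ->
  rho_set t Delta omega (turan_rho t (Delta + Delta %/ omega.-1) omega).
Proof.
move=> w1 D0; set q := Delta %/ omega.-1; have w0 := ltnW w1.
have parts : (omega * q <= Delta + q)%N.
  by rewrite -[X in (X * _)%N]prednK // mulSn addnC leq_add2r mulnC leq_divM.
exists (Delta + q)%N, (turan_rel (Delta + q) omega); split; first exact: ltn_addr.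
split; first exact: turan_rel_simple.
split=> //; split; last by move=> S; apply: turan_clique_le.
by move=> i; have := turan_deg_le parts i w0; rewrite addnK.
Qed.

Lemma turan_rho_lower (t omega Delta : nat) :
  (1 < t)%N -> (t <= omega)%N -> (t <= Delta %/ omega.-1)%N ->
  0 < turan_rho t (Delta + Delta %/ omega.-1) omega /\
  main_term t omega Delta * (1 - INR t / INR (Delta %/ omega.-1).+1)
    <= turan_rho t (Delta + Delta %/ omega.-1) omega.
Proof.
move=> t1 tw tq; set r := omega.-1; set q := Delta %/ r.
have t0 := ltnW t1; have q0 : (0 < q)%N := leq_trans t0 tq.
have w0 : (0 < omega)%N := leq_trans t0 tw.
have wr : omega = r.+1 by rewrite prednK.
have r0 : (0 < r)%N by rewrite -ltnS -wr (leq_trans t1 tw).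
have hD : (Delta <= r * q.+1)%N.
  by rewrite mulnC ltnW // -ltn_divLR // ltnSn.
have parts : (omega * q <= Delta + q)%N.
  by rewrite wr mulSn addnC leq_add2r mulnC leq_divM.
have hk : ('C(r.+1, t) * q ^ t <= k_t t (turan_rel (Delta + q) omega))%N.
  by rewrite -wr k_t_turan_ge.
have n0 : (0 < Delta + q)%N by rewrite addn_gt0 q0 orbT.
split.
  apply: Rdiv_lt_0_compat; apply: lt_0_INR; apply/ssrnat.ltP => //.
  by rewrite (leq_trans _ hk) // muln_gt0 bin_gt0 -wr tw expn_gt0 q0.
rewrite main_term_mul_ratio ?(leq_trans tq) //; apply: INR_ratio_le => //.
  by rewrite !muln_gt0 t0 expn_gt0 r0.
by rewrite main_term_le_k_t.
Qed.

End Bounds.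

Theorem mainTheorem6 (t omega : nat) (ht : (2 <= t)%N) (htw : (t <= omega)%N)
  (F : nat -> R) (hF : forall Delta : nat, is_lub (rho_set t Delta omega) (F Delta)) :
  Un_cv (fun Delta => Rdiv (F Delta) (turan_rho t (Delta + Delta %/ omega.-1) omega)) (IZR 1) /\
  Un_cv (fun Delta => Rdiv (turan_rho t (Delta + Delta %/ omega.-1) omega)
                           (main_term t omega Delta)) (IZR 1).
Proof.
set r := omega.-1.
have w1 : (1 < omega)%N := leq_trans ht htw.
have r0 : (0 < r)%N by rewrite -ltnS prednK // ltnW.
apply: (sandwich_ratios_cv (L := fun Delta => turan_rho t (Delta + Delta %/ r) omega)
          (M := main_term t omega) (d := fun Delta => Rdiv (INR t) (INR (Delta %/ r).+1))
          (N := t * r)).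
  move=> Delta; rewrite -leq_divRL // => tq.
  have D0 : (0 < Delta)%N := leq_trans (leq_trans (ltnW ht) tq) (leq_div Delta r).
  have [L0 ML] := turan_rho_lower ht htw tq.
  split=> //.
  - by case: (hF Delta) => ub _; apply: ub; apply: turan_rho_in_rho_set.
  - case: (hF Delta) => _; apply => _ [n [e [n0 [sg [ic ->]]]]].
    exact: rho_t_le_main_term.
  - left; apply: Rdiv_lt_0_compat; apply: lt_0_INR; apply/ssrnat.ltP => //.
    exact: ltnW.
exact: Un_cv_div_succ_divn.
Qed.
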